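(* Let $k\ge1$ be an integer and let $G$ be a random threshold graph on $n\ge1$ vertices. Let $|k\text{-core}(G)|$ denote the number of vertices of the $k$-core of $G$. Then $$P(|k\text{-core}(G)|=0)=\sum_{i=0}^{k-1}\left(\tfrac12\right)^{n-1}\binom{n-1}{i},$$ and for every integer $j$ with $k+1\le j\le n$, $$P(|k\text{-core}(G)|=j)=\left(\tfrac12\right)^{n+k-j}\binom{n+k-j-1}{k-1}.$$
   Context: A threshold graph on $n\ge1$ vertices is built from a base vertex $v_0$ by successively adding $v_1,\dots,v_{n-1}$, each either isolated (adjacent to no earlier vertex) or dominating (adjacent to all earlier vertices); its creation sequence $\mathrm{seq}(G)=s_1\cdots s_{n-1}$ has $s_i=1$ if $v_i$ is dominating and $s_i=0$ otherwise, and each unlabeled threshold graph on $n$ vertices corresponds to exactly one binary string of length $n-1$. A random threshold graph on $n$ vertices is one whose creation sequence is uniformly distributed over all $2^{n-1}$ binary strings of length $n-1$. The $k$-core of a graph is its maximum induced subgraph in which every vertex has degree at least $k$ (possibly empty). *)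

From mathcomp Require Import all_boot all_order all_algebra.
Set Implicit Arguments. Unset Strict Implicit. Unset Printing Implicit Defensive.
Import GRing.Theory Num.Theory.

(* A creation sequence for a threshold graph on n vertices v_0,...,v_(n-1)
   is a binary string s_1 ... s_(n-1), represented as an (n.-1)-tuple bool
   whose entry at position (i-1) is s_i. *)
Definition creation_seq (n : nat) := (n.-1).-tuple bool.

(* Adjacency of the threshold graph with creation sequence s, vertices 'I_n:
   for i < j, v_i ~ v_j iff v_j is dominating, i.e. s_j = 1. *)
Definition tadj (n : nat) (s : creation_seq n) (u v : 'I_n) : bool :=
  (u != v) && nth false s (maxn u v).-1.

Definition deg_in (n : nat) (s : creation_seq n) (S : {set 'I_n}) (v : 'I_n) : nat :=
  #|[set u in S | tadj s v u]|.

Definition min_deg_ge (n k : nat) (s : creation_seq n) (S : {set 'I_n}) : bool :=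
  [forall v in S, k <= deg_in s S v].

Definition kcore (n k : nat) (s : creation_seq n) : {set 'I_n} :=
  \bigcup_(S : {set 'I_n} | min_deg_ge k s S) S.

Definition prob_kcore_size (n k j : nat) : rat :=
  (#|[set s : creation_seq n | #|kcore k s| == j]|)%:R / (2 ^ n.-1)%:R.

From mathcomp Require Import all_boot all_order all_algebra.
From mathcomp Require Import zify ring.
Set Implicit Arguments. Unset Strict Implicit. Unset Printing Implicit Defensive.
Import GRing.Theory Num.Theory.

(* Vertex v_i (i >= 1) of a threshold graph is adjacent to all later dominating
   vertices, and to all earlier vertices iff it is dominating itself.  So if the
   creation sequence has fewer than k ones, the earliest vertex of any candidate
   subgraph has fewer than k neighbours in it and the k-core is empty.
   Otherwise the k-core consists of v_0, of the vertices v_i with at least k ones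
   among s_i, ..., s_(n-1), and of all dominating vertices; if s_t is the k-th
   one counted from the end, these are v_0, ..., v_t and the k - 1 dominating
   vertices after v_t, i.e. t + k vertices.  Consequently prepending a bit to a
   sequence whose tail already has k ones raises the core size by one, and
   otherwise the core size is k + 1 or 0; the distribution of the core size
   follows by induction on the length of the sequence. *)

Lemma card_ord_pred n (P : pred nat) : #|[set v : 'I_n | P v]| = count P (iota 0 n).
Proof.
by rewrite cardsE cardE /enum_mem size_filter -val_enum_ord count_map -enumT.
Qed.

Lemma count_iotaS (P : pred nat) i n :
  count P (iota i.+1 n) = count (fun w => P w.+1) (iota i n).
Proof. by elim: n i => [|n IHn] i //=; rewrite IHn. Qed.

Lemma count_drop_iota (t : bitseq) x :
  count (fun w => (x <= w) && nth false t w) (iota 0 (size t)) = count id (drop x t).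
Proof.
elim: t x => [|b t IHt] [|x] //=; rewrite count_iotaS.
  by rewrite -[t in RHS]drop0 -IHt.
by rewrite -IHt.
Qed.

Lemma leq_count_drop (T : Type) (a : pred T) (s : seq T) x y :
  x <= y -> count a (drop y s) <= count a (drop x s).
Proof.
move=> le_xy; rewrite -(subnK le_xy) -drop_drop -{2}(cat_take_drop (y - x) (drop x s)).
by rewrite count_cat leq_addl.
Qed.

Lemma count_drop_le (T : Type) (a : pred T) (s : seq T) x : count a (drop x s) <= count a s.
Proof. by rewrite -{2}(drop0 s) leq_count_drop. Qed.

Lemma count_ltn_sum (T : Type) (f : T -> nat) (s : seq T) k :
  count (fun x => f x < k) s = \sum_(0 <= i < k) count (fun x => f x == i) s.
Proof.
elim: k => [|k IHk]; first by rewrite big_geq // (eq_count (a2 := pred0)) ?count_pred0.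
rewrite big_nat_recr //= -IHk.
by elim: s {IHk} => //= x s ->; rewrite ltnS leq_eqVlt; case: ltngtP => _ /=; lia.
Qed.

Fixpoint bitseqs (m : nat) : seq bitseq :=
  if m is m'.+1 then [seq true :: t | t <- bitseqs m'] ++ [seq false :: t | t <- bitseqs m']
  else [:: [::]].

Lemma mem_bitseqs m l : (l \in bitseqs m) = (size l == m).
Proof.
elim: m l => [|m IHm] [|b l] //=.
  by rewrite mem_cat; apply/negbTE/norP; split; apply/mapP => -[].
rewrite mem_cat eqSS -IHm; case: b; rewrite mem_map; try by move=> ? ? [].
  by apply/orb_idr => /mapP [].
by apply/orb_idl => /mapP [].
Qed.

Lemma uniq_bitseqs m : uniq (bitseqs m).
Proof.
have cons_inj (b : bool) : injective (cons b) by move=> ? ? [].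
elim: m => [|m IHm] //=; rewrite cat_uniq !map_inj_uniq // IHm /= andbT.
by apply/hasPn => _ /mapP [t _ ->]; apply/mapP => -[].
Qed.

Lemma card_tuple_pred m (P : pred bitseq) :
  #|[set t : m.-tuple bool | P t]| = count P (bitseqs m).
Proof.
rewrite cardsE cardE /enum_mem size_filter -enumT -(count_map val P).
apply/permP/uniq_perm; first by rewrite map_inj_uniq ?enum_uniq //; apply: val_inj.
  exact: uniq_bitseqs.
move=> l; rewrite mem_bitseqs; apply/mapP/eqP => [[t _ ->]|size_l]; first exact: size_tuple.
by exists (Tuple (introT eqP size_l)); rewrite ?mem_enum.
Qed.

Lemma count_bitseqsS m (P : pred bitseq) :
  count P (bitseqs m.+1) =
    count (fun t => P (true :: t)) (bitseqs m) + count (fun t => P (false :: t)) (bitseqs m).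
Proof. by rewrite count_cat !count_map. Qed.

Lemma count_bitseqs_ones m i : count (fun l => count id l == i) (bitseqs m) = 'C(m, i).
Proof.
elim: m i => [|m IHm] [|i] //; rewrite count_bitseqsS.
  by rewrite (eq_count (a2 := pred0)) ?count_pred0 // IHm bin0.
by rewrite binS addnC -!IHm.
Qed.

Section CoreSize.
Variable k : nat.
Hypothesis k_gt0 : 0 < k.

(* Membership of v_v in the k-core of the threshold graph with creation
   sequence l = s_1 ... s_(n-1), where s_v is [nth false l v.-1]. *)
Definition in_core (l : bitseq) (v : nat) : bool :=
  (k <= count id (drop v.-1 l)) || (nth false l v.-1 && (k <= count id l)).

Definition core_size (l : bitseq) : nat := count (in_core l) (iota 0 (size l).+1).

Lemma count_suffix_or_nth (t : bitseq) (b : bool) : count id t < k ->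
  count (fun w => (k <= count id (drop w t)) || (nth false t w && b)) (iota 0 (size t))
    = b * count id t.
Proof.
move=> t_lt_k.
have suffix_lt_k w : (k <= count id (drop w t)) = false.
  by apply/negbTE; rewrite -ltnNge (leq_ltn_trans (count_drop_le _ _ _) t_lt_k).
under eq_count => w do rewrite suffix_lt_k /=.
case: b; last by rewrite (eq_count (a2 := pred0)) ?count_pred0 // => w; rewrite andbF.
under eq_count => w do rewrite andbT.
by rewrite mul1n -[t in RHS]drop0 -count_drop_iota.
Qed.

Lemma core_size_cons b t :
  core_size (b :: t) = if k <= count id t then (core_size t).+1
                       else if b && (count id t == k.-1) then k.+1 else 0.
Proof.
set c := count id t.
pose rest P := count (fun w => (k <= count id (drop w t)) || (nth false t w && P))
                     (iota 0 (size t)).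
have -> : core_size (b :: t) = (k <= b + c) + ((k <= b + c) + rest (k <= b + c)).
  by rewrite /core_size /= (count_iotaS _ 1) count_iotaS /in_core /= andKb.
have -> : core_size t = (k <= c) + rest (k <= c).
  by rewrite /core_size /= count_iotaS /in_core /= drop0 andKb.
have [k_le_c | c_lt_k] := leqP k c.
  by rewrite (leq_trans k_le_c (leq_addl _ _)).
rewrite /rest count_suffix_or_nth //.
have -> : (k <= b + c) = b && (c == k.-1) by case: b; lia.
by rewrite -/c; case: b; case: eqP => //= ->; lia.
Qed.

Lemma core_size_eq0 l : (core_size l == 0) = (count id l < k).
Proof.
case: l => [|b t]; first by rewrite /core_size /in_core /= leqNgt k_gt0.
rewrite core_size_cons /=; case: (leqP k (count id t)) => [|c_lt_k]; first lia.
case: b => /=; last by rewrite c_lt_k.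
by case: (count id t =P k.-1); lia.
Qed.

Lemma core_size_gt l : k <= count id l -> k < core_size l.
Proof.
elim: l => [|b t IHt] /=; first by rewrite leqNgt k_gt0.
rewrite core_size_cons; case: (leqP k (count id t)) => [/IHt/leqW //|c_lt_k k_le_bc].
have c_eq : count id t = k.-1 by case: b k_le_bc => /=; lia.
by case: b k_le_bc => /= [_ | ?]; [rewrite c_eq eqxx | lia].
Qed.

Lemma core_size_cons_eq b t : (core_size (b :: t) == k.+1) = b && (count id t == k.-1).
Proof.
rewrite core_size_cons; case: (leqP k (count id t)) => [k_le_c | _]; last first.
  by case: (_ && _); rewrite ?eqxx.
have := core_size_gt k_le_c; rewrite eqSS => /gtn_eqF ->.
by case: b => //=; apply/esym/negbTE; lia.
Qed.

Lemma core_size_cons_gt d b t :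
  (core_size (b :: t) == (k + d.+1).+1) = (core_size t == (k + d).+1).
Proof.
rewrite core_size_cons addnS; case: (leqP k (count id t)) => // c_lt_k.
have /eqP -> : core_size t == 0 by rewrite core_size_eq0.
by case: ifP; rewrite // eqSS; lia.
Qed.

Lemma count_core_size_eq0 m :
  count (fun l => core_size l == 0) (bitseqs m) = \sum_(0 <= i < k) 'C(m, i).
Proof.
under eq_count => l do rewrite core_size_eq0.
by rewrite count_ltn_sum; apply: eq_bigr => i _; apply: count_bitseqs_ones.
Qed.

Lemma count_core_size_eq m d : k + d <= m ->
  count (fun l => core_size l == (k + d).+1) (bitseqs m) = 2 ^ d * 'C((m - d).-1, k.-1).
Proof.
elim: m d => [|m IHm] [|d] km; try by move: km; rewrite leqNgt addn_gt0 k_gt0.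
  rewrite addn0 count_bitseqsS !(eq_count (core_size_cons_eq _)) /=.
  by rewrite count_bitseqs_ones count_pred0 addn0 mul1n.
rewrite count_bitseqsS !(eq_count (core_size_cons_gt d _)) IHm; last by rewrite -ltnS -addnS.
by rewrite subSS expnS mul2n -addnn mulnDl.
Qed.

End CoreSize.

Lemma kcore_eq n k (s : creation_seq n) (C : {set 'I_n}) :
  min_deg_ge k s C -> (forall S, min_deg_ge k s S -> S \subset C) -> kcore k s = C.
Proof.
move=> C_min C_max; apply/eqP; rewrite eqEsubset (bigcup_sup _ C_min) andbT.
by apply/bigcupsP.
Qed.

Section ThresholdCore.
Variables (m k : nat) (s : creation_seq m.+1).

(* Junk for v = 0 (it reads s_1); every use is guarded by [v == 0] or [0 < v]. *)
Local Notation dominating v := (nth false s (v : nat).-1).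

Lemma size_creation_seq : size s = m. Proof. exact: size_tuple. Qed.

Lemma card_later_dominating (x : nat) :
  #|[set u : 'I_m.+1 | (x < u) && dominating u]| = count id (drop x s).
Proof.
rewrite (card_ord_pred _ (fun u => (x < u) && dominating u)) /= count_iotaS.
by rewrite -count_drop_iota size_creation_seq; apply: eq_count.
Qed.

Lemma card_base_or_dominating :
  #|[set u : 'I_m.+1 | (u == 0 :> nat) || dominating u]| = (count id s).+1.
Proof.
rewrite (card_ord_pred _ (fun u => (u == 0) || dominating u)) /= count_iotaS.
have := count_drop_iota s 0; rewrite drop0 size_creation_seq => <-.
by congr S; apply: eq_count.
Qed.

Lemma deg_in_le_later (S : {set 'I_m.+1}) (x : 'I_m.+1) :
  (forall u, u \in S -> tadj s x u -> x < u) -> deg_in s S x <= count id (drop x s).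
Proof.
move=> later; rewrite /deg_in -card_later_dominating; apply/subset_leq_card/subsetP => u.
rewrite !inE => /andP [uS adj_xu]; have x_lt_u := later u uS adj_xu.
by move: adj_xu; rewrite x_lt_u /tadj (maxn_idPr (ltnW x_lt_u)) => /andP [].
Qed.

Lemma tadj_base_or_dominating (u v : 'I_m.+1) : u != v ->
  (u == 0 :> nat) || dominating u -> (v == 0 :> nat) || dominating v -> tadj s u v.
Proof.
rewrite /tadj => u_ne_v Zu Zv; rewrite u_ne_v /=.
case: (ltngtP u v) => [u_lt_v | v_lt_u | /val_inj u_eq_v].
- by case/orP: Zv => // /eqP v0; rewrite v0 in u_lt_v.
- by case/orP: Zu => // /eqP u0; rewrite u0 in v_lt_u.
by rewrite u_eq_v eqxx in u_ne_v.
Qed.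

Definition threshold_core : {set 'I_m.+1} := [set v : 'I_m.+1 | in_core k s v].

Lemma min_deg_sub_threshold_core S : min_deg_ge k s S -> S \subset threshold_core.
Proof.
move=> /forall_inP S_min; apply/subsetP => v vS; rewrite inE; apply: contraT.
rewrite negb_or negb_and -!ltnNge => /andP [suffix_lt_k].
have dense x : x \in S -> (forall u, u \in S -> tadj s x u -> x < u) ->
    k <= count id (drop x s).
  by move=> xS later; apply: leq_trans (S_min x xS) (deg_in_le_later later).
case/orP => [not_dom | few].
  have later u : u \in S -> tadj s v u -> v < u.
    move=> _ /andP [_ dom]; rewrite ltnNge; apply: contra not_dom => u_le_v.
    by rewrite -(maxn_idPl u_le_v).
  have := leq_trans (dense v vS later) (leq_count_drop _ _ (leq_pred v)).
  by rewrite leqNgt suffix_lt_k.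
pose w := [arg min_(i < v in S) val i].
have [wS w_min] : w \in S /\ forall u, u \in S -> w <= u by rewrite /w; case: arg_minnP.
have later u : u \in S -> tadj s w u -> w < u.
  move=> uS /andP [u_ne_w _]; rewrite ltn_neqAle w_min // andbT.
  by apply: contra u_ne_w => /eqP/val_inj ->.
have := leq_trans (dense w wS later) (count_drop_le _ _ _).
by rewrite leqNgt few.
Qed.

Lemma min_deg_threshold_core : min_deg_ge k s threshold_core.
Proof.
apply/forall_inP => v; rewrite inE => v_core.
have [k_le_later | later_lt_k] := leqP k (count id (drop v s)).
  rewrite /deg_in (leq_trans k_le_later) // -card_later_dominating.
  apply/subset_leq_card/subsetP => u; rewrite !inE => /andP [v_lt_u dom_u].
  rewrite /in_core /tadj (maxn_idPr (ltnW v_lt_u)) dom_u -val_eqE (ltn_eqF v_lt_u) /=.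
  by rewrite (leq_trans k_le_later (count_drop_le _ _ _)) orbT.
(* Otherwise v is v_0 or dominating, hence adjacent to the [count id s >= k]
   other vertices among v_0 and the dominating ones, all of which lie in the core. *)
have [base_or_dom k_le_c] : ((v == 0 :> nat) || dominating v) /\ k <= count id s.
  case: (posnP v) => [v0 | v_gt0].
    by move: v_core; rewrite /in_core v0 drop0 andKb.
  have split_v : drop v.-1 s = dominating v :: drop v s.
    have v_lt : v.-1 < size s by rewrite size_creation_seq -ltnS prednK.
    by rewrite (drop_nth false v_lt) prednK.
  move: v_core; rewrite /in_core /=.
  case/orP => [k_le_suffix | /andP [-> ->] //].
  split; last exact: leq_trans k_le_suffix (count_drop_le _ _ _).
  apply: contraLR k_le_suffix; rewrite split_v /= => /negbTE ->.
  by rewrite -ltnNge.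
set Z := [set u : 'I_m.+1 | (u == 0 :> nat) || dominating u].
have card_Z : #|Z :\ v| = count id s.
  by have := cardsD1 v Z; rewrite inE base_or_dom card_base_or_dominating => -[].
rewrite /deg_in (leq_trans k_le_c) // -card_Z.
apply/subset_leq_card/subsetP => u; rewrite !inE => /andP [u_ne_v u_base_or_dom].
rewrite tadj_base_or_dominating // 1?eq_sym // andbT /in_core.
by case/orP: u_base_or_dom => [/eqP -> | ->]; rewrite ?drop0 k_le_c ?orbT.
Qed.

Lemma card_kcore : #|kcore k s| = core_size k s.
Proof.
rewrite (kcore_eq min_deg_threshold_core min_deg_sub_threshold_core).
by rewrite (card_ord_pred _ (in_core k s)) /core_size size_creation_seq.
Qed.

End ThresholdCore.

Local Open Scope ring_scope.

Theorem mainTheorem15 (k n : nat) (hk : (1 <= k)%N) (hn : (1 <= n)%N) :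
  prob_kcore_size n k 0 =
    \sum_(0 <= i < k) (1 / 2 : rat) ^+ (n - 1) * ('C(n - 1, i))%:R
  /\
  (forall j : nat, (k + 1 <= j <= n)%N ->
    prob_kcore_size n k j =
      (1 / 2 : rat) ^+ (n + k - j) * ('C(n + k - j - 1, k - 1))%:R).
Proof.
case: n hn => // m _.
have card_kcore_eq j : #|[set s : creation_seq m.+1 | #|kcore k s| == j]| =
                       count (fun l => core_size k l == j) (bitseqs m).
  by rewrite -card_tuple_pred; apply: eq_card => s; rewrite !inE card_kcore.
rewrite /prob_kcore_size /= !subn1 /=; split.
  rewrite card_kcore_eq count_core_size_eq0 // natr_sum mulr_suml.
  by apply: eq_bigr => i _; rewrite mulrC div1r exprVn natrX.
move=> j /andP [k_lt_j j_le_n].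
have [d def_j] : exists d, j = (k + d).+1 by exists (j - k.+1)%N; lia.
subst j; rewrite card_kcore_eq count_core_size_eq //.
have -> : (m.+1 + k - (k + d).+1 = m - d)%N by lia.
have -> : (2 ^ m = 2 ^ d * 2 ^ (m - d))%N by rewrite -expnD; congr expn; lia.
rewrite subn1 !natrM !natrX div1r exprVn.
by field; rewrite !expf_neq0.
Qed.
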